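(* Let $y\in\mathbb{R}^N$, let $H$ be a real $N\times p$ matrix ($N\le p$) with $\operatorname{rank}(H)=N$ and largest singular value equal to $1$, let $\gamma^2>0$, $\epsilon^2>0$, $\sigma^2>0$ be given constants, and let $p_{q}$ be the Markov tree prior probability mass function on $\{0,1\}^p$ described in the context. For $q=(q_1,\dots,q_p)\in\{0,1\}^p$ set $$D(q)=\operatorname{diag}\bigl((\gamma^2)^{q_1}(\epsilon^2)^{1-q_1},\dots,(\gamma^2)^{q_p}(\epsilon^2)^{1-q_p}\bigr).$$ Consider the EM iteration on $\theta=(q,s)\in\{0,1\}^p\times\mathbb{R}^p$, $j=0,1,2,\dots$: E step: $z^{(j)}=s^{(j)}+H^T(y-Hs^{(j)})$; M step: $\theta^{(j+1)}=(q^{(j+1)},s^{(j+1)})\in\arg\max_{(q,s)}\Bigl\{-\tfrac12\,\frac{\|z^{(j)}-s\|_2^2+s^TD(q)^{-1}s}{\sigma^2}+\ln p_{q}(q)+\tfrac12\ln\bigl(\tfrac{\epsilon^2}{\gamma^2}\bigr)\sum_{i=1}^p q_i\Bigr\}$. Then the signal and binary state variable estimates $s^{(+\infty)}$ and $q^{(+\infty)}$ obtained upon convergence of this iteration (i.e., at a fixed point of the E and M steps) satisfy $$s^{(+\infty)}=\bar s(q^{(+\infty)}),\qquad\text{where }\ \bar s(q)=D(q)H^T\bigl[I_N+HD(q)H^T\bigr]^{-1}y .$$ Thus the iteration provides an estimate $q^{(+\infty)}$ of the state variables together with the solution $\bar s(q^{(+\infty)})$ of the corresponding linear system as the signal esti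mate.
   Context: Setting: measurements $y=Hs+$ noise with likelihood $\mathcal N(y\mid Hs,\sigma^2 I_N)$; signal prior $s\mid q,\sigma^2\sim\mathcal N(0,\sigma^2 D(q))$, so $q_i=1$ (resp. $0$) marks large (resp. small) coefficients. The prior $p_q$: the indices $\{1,\dots,p\}$ correspond bijectively (via a fixed map $\upsilon$) to the positions $(i_1,i_2)$ of a $\rho\times\kappa$ array of two-dimensional wavelet coefficients with $L$ decomposition levels. The approximation set is $\mathcal A=\upsilon(\{1,\dots,\rho/2^L\}\times\{1,\dots,\kappa/2^L\})$, the root set is $\mathcal T_{\mathrm{root}}=\upsilon(\{1,\dots,\rho/2^{L-1}\}\times\{1,\dots,\kappa/2^{L-1}\})\setminus\mathcal A$, and the tree set is $\mathcal T=\{1,\dots,p\}\setminus\mathcal A$. The node at $(i_1,i_2)$ is the parent $\pi(\cdot)$ of the four nodes $(2i_1-1,2i_2-1),(2i_1-1,2i_2),(2i_1,2i_2-1),(2i_1,2i_2)$. Given constants $P_{\mathrm{root}},P_{\mathrm H},P_{\mathrm L}\in(0,1)$: $\Pr\{q_i=1\}=1$ for $i\in\mathcal A$; $\Pr\{q_i=1\}=P_{\mathrm{root}}$ independently for $i\in\mathcal T_{\mathrm{root}}$; and for $i\in\mathcal T\setminus\mathcal T_{\mathrm{root}}$, $\Pr\{q_i=1\mid q_{\pi(i)}\}=P_{\mathrm H}$ if $q_{\pi(i)}=1$ and $P_{\mathrm L}$ if $q_{\pi(i)}=0$ (Markov tree). $\|\cdot\|_2$ is the Euclidean norm. *)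

From HB Require Import structures.
From mathcomp Require Import all_boot all_order all_algebra.
From mathcomp Require Import all_classical all_reals exp ereal.
Set Implicit Arguments. Unset Strict Implicit. Unset Printing Implicit Defensive.
Import Order.TTheory GRing.Theory Num.Theory.
Local Open Scope ring_scope.

Section Defs.
Variable R : realType.

Definition sqnorm n (v : 'cV[R]_n) : R := \sum_(i < n) (v i 0) ^+ 2.

Definition Dq p (g2 e2 : R) (q : {ffun 'I_p -> bool}) : 'M[R]_p :=
  diag_mx (\row_i ((g2 ^+ q i) * (e2 ^+ (1 - q i)))).

(* 0-based wavelet positions: the parent of (a,b) is (a/2, b/2)
   (1-based: parent of (2i-1,...),(2i,...) is i). *)
Definition half_ord n (a : 'I_n) : 'I_n :=
  Ordinal (leq_ltn_trans (leq_div a 2) (ltn_ord a)).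

Definition in_A rho kappa L (pos : 'I_rho * 'I_kappa) : bool :=
  (pos.1 < rho %/ 2 ^ L)%N && (pos.2 < kappa %/ 2 ^ L)%N.
Definition in_root rho kappa L (pos : 'I_rho * 'I_kappa) : bool :=
  [&& (pos.1 < rho %/ 2 ^ L.-1)%N, (pos.2 < kappa %/ 2 ^ L.-1)%N
      & ~~ in_A L pos].

Definition parent_idx p rho kappa (w : 'I_rho * 'I_kappa -> 'I_p)
  (ups : 'I_p -> 'I_rho * 'I_kappa) (i : 'I_p) : 'I_p :=
  w (half_ord (ups i).1, half_ord (ups i).2).

Definition bern (P : R) (b : bool) : R := if b then P else 1 - P.

Definition markov_tree_prior p rho kappa L
  (ups : 'I_p -> 'I_rho * 'I_kappa) (w : 'I_rho * 'I_kappa -> 'I_p)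
  (Proot PH PL : R) (q : {ffun 'I_p -> bool}) : R :=
  (\prod_(i < p | in_A L (ups i)) (if q i then 1 else 0)) *
  (\prod_(i < p | in_root L (ups i)) bern Proot (q i)) *
  (\prod_(i < p | ~~ in_A L (ups i) && ~~ in_root L (ups i))
     bern (if q (parent_idx w ups i) then PH else PL) (q i)).

Definition lnE (x : R) : \bar R := if x == 0 then -oo%E else (ln x)%:E.

Definition Mobj p (sigma2 g2 e2 : R) (prior : {ffun 'I_p -> bool} -> R)
  (z : 'cV[R]_p) (q : {ffun 'I_p -> bool}) (s : 'cV[R]_p) : \bar R :=
  ((- (1/2) * (sqnorm (z - s) + (s^T *m invmx (Dq g2 e2 q) *m s) 0 0) / sigma2
    + (1/2) * ln (e2 / g2) * \sum_(i < p) ((q i : nat)%:R))%:E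
   + lnE (prior q))%E.

Definition max_singular_value_one N p (H : 'M[R]_(N, p)) : Prop :=
  (forall x : 'cV[R]_p, sqnorm (H *m x) <= sqnorm x) /\
  (exists x : 'cV[R]_p, x != 0 /\ sqnorm (H *m x) = sqnorm x).

Definition sbar N p (g2 e2 : R) (H : 'M[R]_(N, p)) (y : 'cV[R]_N)
  (q : {ffun 'I_p -> bool}) : 'cV[R]_p :=
  Dq g2 e2 q *m H^T *m invmx (1%:M + H *m Dq g2 e2 q *m H^T) *m y.

End Defs.

(* At a fixed point the M step, with q frozen at q^(+oo), is the minimisation over s of
   ||z - s||^2 + s^T D^{-1} s, a separable strictly convex quadratic whose minimiser is
   characterised by D^{-1} s = z - s.  Since z - s = H^T (y - H s), this reads
   s = D H^T r with r = y - H s, hence (I + H D H^T) r = y; the matrix I + H D H^T is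
   positive definite, so r = (I + H D H^T)^{-1} y and s = sbar(q).  The prior enters only
   through the fact that the all-ones state has positive probability, which forces
   p_q(q^(+oo)) > 0 and so makes the objective finite in s. *)

From HB Require Import structures.
From mathcomp Require Import all_boot all_order all_algebra.
From mathcomp Require Import all_classical all_reals exp ereal.
From mathcomp Require Import ring lra.
Set Implicit Arguments. Unset Strict Implicit. Unset Printing Implicit Defensive.
Import Order.TTheory GRing.Theory Num.Theory.
Local Open Scope ring_scope.

Section LinearAlgebra.
Variable R : realFieldType.

Lemma quad_form_diag n (w e : 'rV[R]_n) :
  (w *m diag_mx e *m w^T) 0 0 = \sum_k e 0 k * w 0 k ^+ 2.
Proof.
by rewrite mul_mx_diag mxE; apply: eq_bigr => k _; rewrite !mxE; ring.
Qed.

Lemma invmx_diag n (e : 'rV[R]_n) : (forall k, e 0 k != 0) ->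
  invmx (diag_mx e) = diag_mx (\row_k (e 0 k)^-1).
Proof.
move=> e_neq0.
have eV : diag_mx e *m diag_mx (\row_k (e 0 k)^-1) = 1%:M.
  rewrite mulmx_diag; apply/matrixP => i j; rewrite !mxE.
  by case: eqP => // _; rewrite mulfV.
have [e_unit _] := mulmx1_unit eV.
by rewrite -[invmx _]mulmx1 -eV mulKmx.
Qed.

Lemma unitmx_1_add_diag_conj m n (A : 'M[R]_(m, n)) (d : 'rV[R]_n) :
  (forall k, 0 < d 0 k) -> 1%:M + A *m diag_mx d *m A^T \in unitmx.
Proof.
move=> d_gt0; rewrite -row_free_unit; apply: inj_row_free => v vM0.
have : (v *m (1%:M + A *m diag_mx d *m A^T) *m v^T) 0 0 = 0.
  by rewrite vM0 mul0mx mxE.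
have vvT : (v *m v^T) 0 0 = \sum_k v 0 k ^+ 2.
  by rewrite mxE; apply: eq_bigr => k _; rewrite mxE.
rewrite mulmxDr mulmx1 mulmxDl mxE !mulmxA -[_ *m A^T *m _]mulmxA -trmx_mul.
rewrite quad_form_diag vvT.
have v2_ge0 k : 0 <= v 0 k ^+ 2 by exact: sqr_ge0.
have vA2_ge0 : 0 <= \sum_k d 0 k * (v *m A) 0 k ^+ 2.
  by apply: sumr_ge0 => k _; rewrite mulr_ge0 ?sqr_ge0 ?ltW.
have v2sum_ge0 : 0 <= \sum_k v 0 k ^+ 2 by exact: sumr_ge0.
move=> sum0; have v2sum0 : \sum_k v 0 k ^+ 2 = 0 by lra.
apply/matrixP => i j; rewrite ord1 mxE.
by have /eqP := psumr_eq0P (fun k _ => v2_ge0 k) v2sum0 (i := j) isT; rewrite sqrf_eq0 => /eqP.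
Qed.

Lemma fixed_point_solve N p (D : 'M[R]_p) (A : 'M[R]_(N, p)) (y : 'cV[R]_N)
    (s : 'cV[R]_p) :
  1%:M + A *m D *m A^T \in unitmx -> s = D *m (A^T *m (y - A *m s)) ->
  s = D *m A^T *m invmx (1%:M + A *m D *m A^T) *m y.
Proof.
move=> M_unit s_fix.
have r_sol : (1%:M + A *m D *m A^T) *m (y - A *m s) = y.
  by rewrite mulmxDl mul1mx -!mulmxA -s_fix subrK.
by rewrite -{1}r_sol -!mulmxA mulKmx // mulmxA.
Qed.

End LinearAlgebra.

Section SeparableQuadratic.
Variable R : realFieldType.

Lemma penalized_sqr_excess (d a b : R) : 0 < d ->
  (a - b) ^+ 2 + d^-1 * b ^+ 2 - ((a - a * d / (1 + d)) ^+ 2 + d^-1 * (a * d / (1 + d)) ^+ 2)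
  = (1 + d^-1) * (b - a * d / (1 + d)) ^+ 2.
Proof. by move=> d_gt0; field; rewrite gt_eqF //; lra. Qed.

Variables (n : nat) (d : 'rV[R]_n) (z : 'cV[R]_n).
Hypothesis d_gt0 : forall k, 0 < d 0 k.

Definition sep_quad (s : 'cV[R]_n) : R :=
  \sum_k ((z k 0 - s k 0) ^+ 2 + (d 0 k)^-1 * s k 0 ^+ 2).

Definition sep_quad_argmin : 'cV[R]_n := \col_k (z k 0 * d 0 k / (1 + d 0 k)).

Lemma sep_quad_argmin_unique (s : 'cV[R]_n) :
  (forall t, sep_quad s <= sep_quad t) -> s = sep_quad_argmin.
Proof.
move=> s_min.
pose excess k := (1 + (d 0 k)^-1) * (s k 0 - sep_quad_argmin k 0) ^+ 2.
have excess_ge0 k : 0 <= excess k.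
  by rewrite mulr_ge0 ?sqr_ge0 // addr_ge0 // invr_ge0 ltW.
have excess_sum : \sum_k excess k = sep_quad s - sep_quad sep_quad_argmin.
  rewrite -sumrB; apply: eq_bigr => k _.
  by rewrite /excess !mxE penalized_sqr_excess.
have excess_sum0 : \sum_k excess k = 0.
  apply/eqP; rewrite eq_le sumr_ge0 // andbT excess_sum subr_le0; exact: s_min.
apply/matrixP => k j; rewrite ord1.
have /eqP := psumr_eq0P (fun k _ => excess_ge0 k) excess_sum0 (i := k) isT.
rewrite mulf_eq0 sqrf_eq0 subr_eq0 => /orP[|/eqP //].
by rewrite gt_eqF // ltr_wpDr ?invr_ge0 ?ltW.
Qed.

Lemma sep_quad_argmin_fixed : sep_quad_argmin = diag_mx d *m (z - sep_quad_argmin).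
Proof.
apply/matrixP => k j; rewrite ord1 mul_diag_mx !mxE.
by field; rewrite gt_eqF //; have := d_gt0 k; lra.
Qed.

End SeparableQuadratic.

Section MStep.
Variable R : realType.

Definition Dq_entries p (g2 e2 : R) (q : {ffun 'I_p -> bool}) : 'rV[R]_p :=
  \row_i (g2 ^+ q i * e2 ^+ (1 - q i)).

Lemma Dq_entries_gt0 p (g2 e2 : R) (q : {ffun 'I_p -> bool}) k :
  0 < g2 -> 0 < e2 -> 0 < Dq_entries g2 e2 q 0 k.
Proof. by move=> g2_gt0 e2_gt0; rewrite mxE; case: (q k); rewrite /= expr0 expr1 ?mulr1 ?mul1r. Qed.

Lemma Mstep_cost_sep_quad p (g2 e2 : R) (q : {ffun 'I_p -> bool}) (z s : 'cV[R]_p) :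
  0 < g2 -> 0 < e2 ->
  sqnorm (z - s) + (s^T *m invmx (Dq g2 e2 q) *m s) 0 0
  = sep_quad (Dq_entries g2 e2 q) z s.
Proof.
move=> g2_gt0 e2_gt0.
rewrite /Dq invmx_diag => [|k]; last by rewrite gt_eqF // Dq_entries_gt0.
rewrite -[s in (_ *m _ *m s)]trmxK quad_form_diag /sqnorm /sep_quad -big_split.
by apply: eq_bigr => k _; rewrite !mxE.
Qed.

Lemma markov_tree_prior_all_true_gt0 p rho kappa L
    (ups : 'I_p -> 'I_rho * 'I_kappa) (w : 'I_rho * 'I_kappa -> 'I_p) (Proot PH PL : R) :
  0 < Proot -> 0 < PH -> 0 < markov_tree_prior L ups w Proot PH PL [ffun => true].
Proof.
move=> Proot_gt0 PH_gt0.
by rewrite !mulr_gt0 //; apply: prodr_gt0 => i _; rewrite !ffunE.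
Qed.

Variables (p : nat) (sigma2 g2 e2 : R) (prior : {ffun 'I_p -> bool} -> R).
Variables (z : 'cV[R]_p) (qinf : {ffun 'I_p -> bool}) (sinf : 'cV[R]_p).
Hypothesis Mobj_max : forall q s,
  (Mobj sigma2 g2 e2 prior z q s <= Mobj sigma2 g2 e2 prior z qinf sinf)%E.

(* A state of prior probability 0 has objective -oo, so it cannot beat a state of
   positive probability. *)
Lemma Mobj_argmax_prior_neq0 q0 : prior q0 != 0 -> prior qinf != 0.
Proof.
move=> prior_q0; apply/negP => /eqP prior_qinf; have := Mobj_max q0 0.
by rewrite /Mobj /lnE prior_qinf eqxx addeNy leeNy_eq (negbTE prior_q0) -EFinD.
Qed.

Lemma Mobj_argmax_cost_le s : 0 < sigma2 -> prior qinf != 0 ->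
  sqnorm (z - sinf) + (sinf^T *m invmx (Dq g2 e2 qinf) *m sinf) 0 0
  <= sqnorm (z - s) + (s^T *m invmx (Dq g2 e2 qinf) *m s) 0 0.
Proof.
move=> sigma2_gt0 prior_qinf; have := Mobj_max qinf s.
rewrite /Mobj /lnE (negbTE prior_qinf) -!EFinD lee_fin !lerD2r !mulNr lerN2.
by rewrite ler_pM2r ?invr_gt0 // ler_pM2l.
Qed.

End MStep.

Theorem theorem1 (R : realType) (N p rho kappa L : nat)
  (ups : 'I_p -> 'I_rho * 'I_kappa) (w : 'I_rho * 'I_kappa -> 'I_p)
  (Proot PH PL g2 e2 sigma2 : R)
  (H : 'M[R]_(N, p)) (y : 'cV[R]_N)
  (qinf : {ffun 'I_p -> bool}) (sinf : 'cV[R]_p) :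
  cancel ups w -> cancel w ups ->
  (0 < L)%N -> (2 ^ L %| rho)%N -> (2 ^ L %| kappa)%N ->
  0 < Proot < 1 -> 0 < PH < 1 -> 0 < PL < 1 ->
  (N <= p)%N -> \rank H = N -> max_singular_value_one H ->
  0 < g2 -> 0 < e2 -> 0 < sigma2 ->
  let z := sinf + H^T *m (y - H *m sinf) in
  (forall (q : {ffun 'I_p -> bool}) (s : 'cV[R]_p),
     (Mobj sigma2 g2 e2 (markov_tree_prior L ups w Proot PH PL) z q s
      <= Mobj sigma2 g2 e2 (markov_tree_prior L ups w Proot PH PL) z qinf sinf)%E) ->
  sinf = sbar g2 e2 H y qinf.
Proof.
move=> _ _ _ _ _ /andP[Proot_gt0 _] /andP[PH_gt0 _] _ _ _ _ g2_gt0 e2_gt0 sigma2_gt0 z Mmax.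
set d := Dq_entries g2 e2 qinf.
have d_gt0 k : 0 < d 0 k by exact: Dq_entries_gt0.
have prior_qinf := Mobj_argmax_prior_neq0 Mmax
  (lt0r_neq0 (markov_tree_prior_all_true_gt0 L ups w PL Proot_gt0 PH_gt0)).
have sinf_min t : sep_quad d z sinf <= sep_quad d z t.
  rewrite -!Mstep_cost_sep_quad //; exact: Mobj_argmax_cost_le.
have sinf_fix : sinf = Dq g2 e2 qinf *m (H^T *m (y - H *m sinf)).
  have -> : H^T *m (y - H *m sinf) = z - sinf by rewrite /z addrAC subrr add0r.
  rewrite (sep_quad_argmin_unique d_gt0 sinf_min); exact: sep_quad_argmin_fixed.
apply: fixed_point_solve sinf_fix.
exact: unitmx_1_add_diag_conj.
Qed.
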